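(* Let $n\ge2$ and let $P\in\mathrm{Mat}(n^2,\mathbb{C})$ be an orthogonal projection ($P^*=P$, $P^2=P$) of rank $r$. Put $P_1=P\otimes I_n$, $P_2=I_n\otimes P$, $t_m=\operatorname{tr}_3\big((P_1P_2)^m\big)$ and $F[P]=(rn-t_1)(t_2-t_3)-(t_1-t_2)^2$. (a) If there is a real number $Q>0$ such that $Q^2(P_1P_2P_1-P_2P_1P_2)=P_1-P_2$, then $F[P]=0$. (b) If $F[P]=0$ and $P_1P_2\neq P_2P_1$, then $Q^2(P_1P_2P_1-P_2P_1P_2)=P_1-P_2$ holds with $Q>0$ given by $$Q^2=\frac{rn-t_1}{t_1-t_2}.$$
   Context: $I_n$ is the $n\times n$ identity matrix, $\otimes$ is the Kronecker product, $P^*$ is the conjugate transpose, and $\operatorname{tr}_3$ is the matrix trace on $\mathrm{Mat}(n^3,\mathbb{C})$. *)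

From HB Require Import structures.
From mathcomp Require Import all_boot all_order all_algebra.
From mathcomp Require Import complex mxtens.
From mathcomp Require Import reals.
Set Implicit Arguments. Unset Strict Implicit. Unset Printing Implicit Defensive.
Import Order.TTheory GRing.Theory Num.Theory.
Local Open Scope ring_scope.

Definition adjmx (R : realType) m n (A : 'M[R[i]]_(m, n)) : 'M[R[i]]_(n, m) :=
  (map_mx (@conjc R) A)^T.

Definition P1 (R : realType) (n : nat) (P : 'M[R[i]]_(n * n)) : 'M[R[i]]_(n * n * n) :=
  P *t (1%:M : 'M[R[i]]_n).

(* P_2 = I_n ⊗ P, a matrix of size n (n^2) = n^3, reindexed by the
   associativity n*(n*n) = (n*n)*n (this does not change the numeric index). *)
Definition P2 (R : realType) (n : nat) (P : 'M[R[i]]_(n * n)) : 'M[R[i]]_(n * n * n) :=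
  castmx (mulnA n n n, mulnA n n n) ((1%:M : 'M[R[i]]_n) *t P).

Definition tm (R : realType) (n : nat) (P : 'M[R[i]]_(n * n)) (m : nat) : R[i] :=
  \tr (iter m (fun X => X *m (P1 P *m P2 P)) 1%:M).

Definition FP (R : realType) (n : nat) (P : 'M[R[i]]_(n * n)) : R[i] :=
  ((\rank P * n)%:R - tm P 1) * (tm P 2 - tm P 3) - (tm P 1 - tm P 2) ^+ 2.

From HB Require Import structures.
From mathcomp Require Import all_boot all_order all_algebra.
From mathcomp Require Import complex mxtens.
From mathcomp Require Import reals.
From mathcomp Require Import ring.

Set Implicit Arguments. Unset Strict Implicit. Unset Printing Implicit Defensive.
Import Order.TTheory GRing.Theory Num.Theory.
Local Open Scope ring_scope.

(* Write A = P_1 and B = P_2: orthogonal projections with tr A = tr B = rn, and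
   t_k = tr((AB)^k).  Multiplying Q^2 (ABA - BAB) = A - B by A and by ABA and
   taking traces gives Q^2 (t_1 - t_2) = rn - t_1 and Q^2 (t_2 - t_3) = t_1 - t_2,
   whence F[P] = 0.  Conversely, t_1 - t_2 and rn - t_1 are the squared
   Hilbert-Schmidt norms of AB - ABA and A - AB, so they are positive unless A and
   B commute, and q = (rn - t_1)/(t_1 - t_2) > 0 satisfies the first relation;
   F[P] = 0 is then exactly the second one.  Together they make the norm of
   (1 - B)(A - qABA) vanish, i.e. A - qABA = B(A - qABA); taking adjoints,
   A - qABA = AB - qABAB, and by symmetry B - qBAB = AB - qABAB as well. *)

Lemma subr_swap (V : zmodType) (a b x y : V) : a - x = b - y -> x - y = a - b.
Proof.
by move=> e; rewrite -[a](subrK x) e addrAC [b - y - b]addrAC subrr add0r addrC.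
Qed.

Section TraceRelations.
Variables (K : comPzRingType) (a t1 t2 t3 c : K).
Hypotheses (rel1 : c * (t1 - t2) = a - t1) (rel2 : c * (t2 - t3) = t1 - t2).

Lemma trace_relations_F_eq0 : (a - t1) * (t2 - t3) - (t1 - t2) ^+ 2 = 0.
Proof. by rewrite -rel1 -rel2; ring. Qed.

Lemma trace_relations_residual_eq0 :
  a - 2 * c * t1 + c ^+ 2 * t2 - (t1 - 2 * c * t2 + c ^+ 2 * t3) = 0.
Proof.
transitivity (a - t1 - 2 * (c * (t1 - t2)) + c * (c * (t2 - t3))); first by ring.
by rewrite rel2 rel1; ring.
Qed.

End TraceRelations.

Lemma trace_relations_of_F_eq0 (K : fieldType) (a t1 t2 t3 : K) : t1 - t2 != 0 ->
    (a - t1) * (t2 - t3) - (t1 - t2) ^+ 2 = 0 ->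
  (a - t1) / (t1 - t2) * (t1 - t2) = a - t1 /\
  (a - t1) / (t1 - t2) * (t2 - t3) = t1 - t2.
Proof.
move=> gap_neq0 /eqP; rewrite subr_eq0 => /eqP F0.
by split; [rewrite divfK | rewrite mulrAC F0 expr2 mulfK].
Qed.

Lemma castmx_mulmx (K : pzRingType) m m' (e : m = m') (X Y : 'M[K]_m) :
  castmx (e, e) X *m castmx (e, e) Y = castmx (e, e) (X *m Y).
Proof. by case: m' / e; rewrite !castmx_id. Qed.

Lemma mxtrace_castmx (K : pzRingType) m m' (e : m = m') (X : 'M[K]_m) :
  \tr (castmx (e, e) X) = \tr X.
Proof. by case: m' / e; rewrite castmx_id. Qed.

Lemma mxtrace_tens (K : comPzRingType) m p (X : 'M[K]_m) (Y : 'M[K]_p) :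
  \tr (X *t Y) = \tr X * \tr Y.
Proof. by rewrite /mxtrace mulr_sum; apply: eq_bigr => k _; rewrite mxE. Qed.

Lemma mxtrace_idem (K : fieldType) m (X : 'M[K]_m) :
  X *m X = X -> \tr X = (\rank X)%:R.
Proof.
move=> XX; have rc : row_base X *m col_base X = 1%:M.
  apply: (row_free_inj (row_base_free X)); rewrite mul1mx.
  apply: (row_full_inj (col_base_full X)).
  by rewrite 2!mulmxA mulmx_base -mulmxA mulmx_base XX.
by rewrite -[in LHS](mulmx_base X) mxtrace_mulC rc mxtrace1.
Qed.

Lemma braid_of_residuals (K : comPzRingType) N (A B : 'M[K]_N) (c : K) :
    (A - c *: (A *m B *m A)) *m B = A - c *: (A *m B *m A) ->
    A *m (B - c *: (B *m A *m B)) = B - c *: (B *m A *m B) ->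
  c *: (A *m B *m A - B *m A *m B) = A - B.
Proof.
move=> resA resB; rewrite scalerBr; apply: subr_swap.
by rewrite -resA -resB mulmxBl mulmxBr -scalemxAl -scalemxAr !mulmxA.
Qed.

Lemma complex_gt0_sqr (R : realType) (q : R[i]) :
  0 < q -> exists Q : R, 0 < Q /\ (Q ^+ 2)%:C%C = q.
Proof.
move=> q_gt0; have Re_gt0 : 0 < complex.Re q by move: q_gt0; rewrite ltcE => /andP[].
exists (Num.sqrt (complex.Re q)); rewrite sqrtr_gt0 sqr_sqrtr ?ltW //.
by split=> //; rewrite RRe_real // gtr0_real.
Qed.

Section ConjugateTranspose.
Variable R : realType.
Local Notation C := R[i].

Lemma adjmxM m n p (X : 'M[C]_(m, n)) (Y : 'M[C]_(n, p)) :
  adjmx (X *m Y) = adjmx Y *m adjmx X.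
Proof. by rewrite /adjmx map_mxM trmx_mul. Qed.

Lemma adjmxB m n (X Y : 'M[C]_(m, n)) : adjmx (X - Y) = adjmx X - adjmx Y.
Proof. by rewrite /adjmx map_mxB raddfB. Qed.

Lemma adjmx_realZ m n (s : R) (X : 'M[C]_(m, n)) :
  adjmx (s%:C%C *: X) = s%:C%C *: adjmx X.
Proof.
by apply/matrixP => i j; rewrite !mxE rmorphM; congr (_ * _); exact: conjc_real.
Qed.

Lemma adjmx1 m : adjmx (1%:M : 'M[C]_m) = 1%:M.
Proof. by rewrite /adjmx map_mx1 trmx1. Qed.

Lemma adjmx_tens m n p q (X : 'M[C]_(m, n)) (Y : 'M[C]_(p, q)) :
  adjmx (X *t Y) = adjmx X *t adjmx Y.
Proof. by rewrite /adjmx map_mxT trmx_tens. Qed.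

Lemma adjmx_castmx m m' (e : m = m') (X : 'M[C]_m) :
  adjmx (castmx (e, e) X) = castmx (e, e) (adjmx X).
Proof. by case: m' / e; rewrite !castmx_id. Qed.

Lemma herm_mulmx_fixedC n (B G : 'M[C]_n) :
  adjmx B = B -> adjmx G = G -> B *m G = G -> G *m B = G.
Proof. by move=> B_herm G_herm BG; rewrite -[in LHS]G_herm -B_herm -adjmxM BG. Qed.

Lemma mxtrace_mul_adjmx m p (W : 'M[C]_(m, p)) :
  \tr (W *m adjmx W) = \sum_i \sum_j W i j * (W i j)^*%C.
Proof.
by apply: eq_bigr => i _; rewrite mxE; apply: eq_bigr => j _; rewrite !mxE.
Qed.

Lemma mxtrace_mul_adjmx_ge0 m p (W : 'M[C]_(m, p)) : 0 <= \tr (W *m adjmx W).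
Proof.
by rewrite mxtrace_mul_adjmx; do 2![apply: sumr_ge0 => ? _]; exact: mulcJ_ge0.
Qed.

Lemma mxtrace_mul_adjmx_eq0 m p (W : 'M[C]_(m, p)) :
  \tr (W *m adjmx W) = 0 -> W = 0.
Proof.
have ge0 i : 0 <= \sum_j W i j * (W i j)^*%C.
  by apply: sumr_ge0 => j _; exact: mulcJ_ge0.
rewrite mxtrace_mul_adjmx => /psumr_eq0P W0; apply/matrixP => i j.
have /psumr_eq0P Wi0 := W0 (fun i _ => ge0 i) i isT.
have /eqP := Wi0 (fun j _ => mulcJ_ge0 _) j isT.
by rewrite mulf_eq0 conjc_eq0 orbb mxE => /eqP.
Qed.

End ConjugateTranspose.

Definition trpow (K : comPzRingType) N (A B : 'M[K]_N) k : K :=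
  \tr (iter k (fun X => X *m (A *m B)) 1%:M).

(* The paper's F[P] is [Fpair (P1 P) (P2 P)], since tr P_1 = rn. *)
Definition Fpair (K : comPzRingType) N (A B : 'M[K]_N) : K :=
  (\tr A - trpow A B 1) * (trpow A B 2 - trpow A B 3) - (trpow A B 1 - trpow A B 2) ^+ 2.

Section TracePowers.
Variables (K : comPzRingType) (N : nat) (A B : 'M[K]_N).

Lemma trpow1E : trpow A B 1 = \tr (A *m B).
Proof. by rewrite /trpow /= mul1mx. Qed.

Lemma trpow2E : trpow A B 2 = \tr (A *m B *m A *m B).
Proof. by rewrite /trpow /= mul1mx !mulmxA. Qed.

Lemma trpow3E : trpow A B 3 = \tr (A *m B *m A *m B *m A *m B).
Proof. by rewrite /trpow /= mul1mx !mulmxA. Qed.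

Lemma trpowC k : trpow B A k = trpow A B k.
Proof.
have shift j : B *m iter j (fun X => X *m (A *m B)) 1%:M
             = iter j (fun X => X *m (B *m A)) 1%:M *m B.
  by elim: j => [|j IHj] /=; rewrite ?mulmx1 ?mul1mx // mulmxA IHj -!mulmxA.
case: k => [|k]; rewrite /trpow // /= mulmxA -shift.
by rewrite [LHS]mxtrace_mulC [in LHS]mulmxA mxtrace_mulC.
Qed.

End TracePowers.

Section OrthogonalProjectionPair.
Variables (R : realType) (N : nat) (A B : 'M[R[i]]_N).
Hypotheses (A_herm : adjmx A = A) (B_herm : adjmx B = B).
Hypotheses (AA : A *m A = A) (BB : B *m B = B).
Local Notation t := (trpow A B).

Lemma mxtrace_ABA : \tr (A *m B *m A) = t 1.
Proof. by rewrite trpow1E mxtrace_mulC mulmxA AA. Qed.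

Lemma mxtrace_ABABA : \tr (A *m B *m A *m B *m A) = t 2.
Proof. by rewrite trpow2E mxtrace_mulC !mulmxA AA. Qed.

Lemma mxtrace_BA : \tr (B *m A) = t 1.
Proof. by rewrite -(trpowC A B) trpow1E. Qed.

Lemma mxtrace_BABA : \tr (B *m A *m B *m A) = t 2.
Proof. by rewrite -(trpowC A B) trpow2E. Qed.

Lemma mxtrace_BABABA : \tr (B *m A *m B *m A *m B *m A) = t 3.
Proof. by rewrite -(trpowC A B) trpow3E. Qed.

Lemma braid_trace_relations (q : R[i]) :
    q *: (A *m B *m A - B *m A *m B) = A - B ->
  q * (t 1 - t 2) = \tr A - t 1 /\ q * (t 2 - t 3) = t 1 - t 2.
Proof.
move=> braid; split.
  have := congr1 (fun X => \tr (A *m X)) braid.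
  rewrite /= -scalemxAr mxtraceZ !mulmxBr !raddfB /= !mulmxA AA.
  by rewrite mxtrace_ABA -trpow2E -trpow1E.
have := congr1 (fun X => \tr (A *m B *m A *m X)) braid.
rewrite /= -scalemxAr mxtraceZ !mulmxBr !raddfB /= !mulmxA.
by rewrite -[A *m B *m A *m A]mulmxA AA mxtrace_ABABA mxtrace_ABA -trpow2E -trpow3E.
Qed.

Lemma trpow_gapE :
  t 1 - t 2 = \tr ((A *m B - A *m B *m A) *m adjmx (A *m B - A *m B *m A)).
Proof.
have -> : (A *m B - A *m B *m A) *m adjmx (A *m B - A *m B *m A)
          = A *m B *m A - A *m B *m A *m B *m A.
  rewrite adjmxB !adjmxM A_herm B_herm mulmxA !mulmxBl !mulmxBr !mulmxA.
  rewrite -!(mulmxA _ B B) -!(mulmxA _ A A) BB AA.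
  by rewrite (subrr (A *m B *m A *m B *m A)) subr0.
by rewrite [in RHS]raddfB /= mxtrace_ABA mxtrace_ABABA.
Qed.

Lemma mxtrace_gapE : \tr A - t 1 = \tr ((A - A *m B) *m adjmx (A - A *m B)).
Proof.
have -> : (A - A *m B) *m adjmx (A - A *m B) = A - A *m B *m A.
  rewrite adjmxB adjmxM A_herm B_herm !mulmxBl !mulmxBr !mulmxA AA.
  by rewrite -(mulmxA _ B B) BB (subrr (A *m B *m A)) subr0.
by rewrite [in RHS]raddfB /= mxtrace_ABA.
Qed.

Lemma trpow_gap_gt0 : A *m B != B *m A -> 0 < t 1 - t 2.
Proof.
move=> AB_BA; rewrite trpow_gapE lt0r mxtrace_mul_adjmx_ge0 andbT.
apply: contra AB_BA => /eqP/mxtrace_mul_adjmx_eq0/eqP; rewrite subr_eq0 => /eqP ABA.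
apply/eqP; rewrite ABA; have := congr1 (@adjmx R N N) ABA.
by rewrite !adjmxM A_herm B_herm mulmxA => ->.
Qed.

Lemma mxtrace_gap_gt0 : A *m B != B *m A -> 0 < \tr A - t 1.
Proof.
move=> AB_BA; rewrite mxtrace_gapE lt0r mxtrace_mul_adjmx_ge0 andbT.
apply: contra AB_BA => /eqP/mxtrace_mul_adjmx_eq0/eqP; rewrite subr_eq0 => /eqP AB.
have := congr1 (@adjmx R N N) AB; rewrite adjmxM A_herm B_herm => BA.
by rewrite -AB -BA.
Qed.

Lemma mxtrace_proj_compl_norm (G : 'M[R[i]]_N) : adjmx G = G ->
  \tr ((G - B *m G) *m adjmx (G - B *m G)) = \tr (G *m G) - \tr (B *m (G *m G)).
Proof.
move=> G_herm; rewrite adjmxB adjmxM G_herm B_herm !mulmxBl !mulmxBr !raddfB /=.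
rewrite !mulmxA [\tr (B *m G *m G *m B)]mxtrace_mulC !mulmxA BB.
by rewrite [\tr (G *m G *m B)]mxtrace_mulC !mulmxA; ring.
Qed.

Lemma braid_residual_herm (s : R) :
  adjmx (A - s%:C%C *: (A *m B *m A)) = A - s%:C%C *: (A *m B *m A).
Proof. by rewrite adjmxB adjmx_realZ !adjmxM A_herm B_herm mulmxA. Qed.

Lemma proj_braid_residual (s : R) :
    s%:C%C * (t 1 - t 2) = \tr A - t 1 -> s%:C%C * (t 2 - t 3) = t 1 - t 2 ->
  B *m (A - s%:C%C *: (A *m B *m A)) = A - s%:C%C *: (A *m B *m A).
Proof.
move=> rel1 rel2; set c := s%:C%C; set M := A *m B *m A.
have AM : A *m M = M by rewrite /M !mulmxA AA.
have MA : M *m A = M by rewrite /M -mulmxA AA.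
have MM : M *m M = A *m B *m A *m B *m A by rewrite /M !mulmxA -(mulmxA _ A A) AA.
set G := A - c *: M.
have G_herm : adjmx G = G := braid_residual_herm s.
have GG : G *m G = A - c *: M - c *: (M - c *: (M *m M)).
  by rewrite !mulmxBl !mulmxBr -!scalemxAl -!scalemxAr AA AM MA scalerBr.
have trGG : \tr (G *m G) = \tr A - 2 * c * t 1 + c ^+ 2 * t 2.
  rewrite GG !raddfB /= !mxtraceZ MM mxtrace_ABA mxtrace_ABABA.
  (* [ring] is very slow when the traces themselves are its atoms. *)
  by move: (\tr A) (t 1) (t 2) => a t1 t2; ring.
have trBGG : \tr (B *m (G *m G)) = t 1 - 2 * c * t 2 + c ^+ 2 * t 3.
  rewrite GG !mulmxBr -!scalemxAr mulmxBr -scalemxAr !raddfB /= !mxtraceZ MM /M !mulmxA.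
  rewrite mxtrace_BA mxtrace_BABA mxtrace_BABABA.
  by move: (t 1) (t 2) (t 3) => t1 t2 t3; ring.
apply/eqP; rewrite eq_sym -subr_eq0; apply/eqP/mxtrace_mul_adjmx_eq0.
rewrite mxtrace_proj_compl_norm // trGG trBGG.
move: rel1 rel2; move: (\tr A) (t 1) (t 2) (t 3) => a t1 t2 t3.
exact: trace_relations_residual_eq0.
Qed.

Lemma Fpair_eq0_of_braid (q : R[i]) :
  q *: (A *m B *m A - B *m A *m B) = A - B -> Fpair A B = 0.
Proof.
move=> /braid_trace_relations[]; rewrite /Fpair.
by move: (\tr A) (t 1) (t 2) (t 3) => a t1 t2 t3; exact: trace_relations_F_eq0.
Qed.

End OrthogonalProjectionPair.

Section EqualTraceProjectionPair.
Variables (R : realType) (N : nat) (A B : 'M[R[i]]_N).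
Hypotheses (A_herm : adjmx A = A) (B_herm : adjmx B = B).
Hypotheses (AA : A *m A = A) (BB : B *m B = B) (trBA : \tr B = \tr A).
Local Notation t := (trpow A B).

Lemma braid_of_trace_relations (s : R) :
    s%:C%C * (t 1 - t 2) = \tr A - t 1 -> s%:C%C * (t 2 - t 3) = t 1 - t 2 ->
  s%:C%C *: (A *m B *m A - B *m A *m B) = A - B.
Proof.
move=> rel1 rel2; have resA := proj_braid_residual A_herm B_herm AA BB rel1 rel2.
have resB : A *m (B - s%:C%C *: (B *m A *m B)) = B - s%:C%C *: (B *m A *m B).
  by apply: (proj_braid_residual B_herm A_herm BB AA); rewrite ?trBA !(trpowC A B).
apply: braid_of_residuals resB.
exact: herm_mulmx_fixedC B_herm (braid_residual_herm A_herm B_herm s) resA.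
Qed.

Lemma braid_of_Fpair_eq0 : Fpair A B = 0 -> A *m B != B *m A ->
  exists Q : R, 0 < Q /\
    (Q ^+ 2)%:C%C = (\tr A - t 1) / (t 1 - t 2) /\
    (Q ^+ 2)%:C%C *: (A *m B *m A - B *m A *m B) = A - B.
Proof.
move=> F0 AB_BA; have gap_gt0 := trpow_gap_gt0 A_herm B_herm AA BB AB_BA.
have trA_gap_gt0 := mxtrace_gap_gt0 A_herm B_herm AA BB AB_BA.
have [rel1 rel2] := trace_relations_of_F_eq0 (lt0r_neq0 gap_gt0) F0.
have [Q [Q_gt0 QE]] := complex_gt0_sqr (divr_gt0 trA_gap_gt0 gap_gt0).
rewrite -QE in rel1 rel2; exists Q; do 2!split=> //.
exact: braid_of_trace_relations rel1 rel2.
Qed.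

End EqualTraceProjectionPair.

Section TensorFactors.
Variables (R : realType) (n : nat) (P : 'M[R[i]]_(n * n)).
Hypotheses (P_herm : adjmx P = P) (PP : P *m P = P).

Lemma P1_herm : adjmx (P1 P) = P1 P.
Proof. by rewrite /P1 adjmx_tens P_herm adjmx1. Qed.

Lemma P2_herm : adjmx (P2 P) = P2 P.
Proof. by rewrite /P2 adjmx_castmx adjmx_tens adjmx1 P_herm. Qed.

Lemma P1_idem : P1 P *m P1 P = P1 P.
Proof. by rewrite /P1 tensmx_mul PP mulmx1. Qed.

Lemma P2_idem : P2 P *m P2 P = P2 P.
Proof. by rewrite /P2 castmx_mulmx tensmx_mul mulmx1 PP. Qed.

Lemma mxtrace_P1 : \tr (P1 P) = (\rank P * n)%:R.
Proof. by rewrite /P1 mxtrace_tens (mxtrace_idem PP) mxtrace1 natrM. Qed.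

Lemma mxtrace_P2 : \tr (P2 P) = (\rank P * n)%:R.
Proof.
by rewrite /P2 mxtrace_castmx mxtrace_tens mxtrace1 (mxtrace_idem PP) natrM mulrC.
Qed.

End TensorFactors.

Unset Implicit Arguments.

Theorem proposition1 (R : realType) (n : nat) (P : 'M[R[i]]_(n * n)) :
  (2 <= n)%N ->
  adjmx P = P -> P *m P = P ->
  (* (a) *)
  ((exists Q : R, 0 < Q /\
      ((Q ^+ 2)%:C)%C *: (P1 P *m P2 P *m P1 P - P2 P *m P1 P *m P2 P) = P1 P - P2 P)
     -> FP P = 0)
  /\
  (* (b) *)
  (FP P = 0 -> P1 P *m P2 P != P2 P *m P1 P ->
     exists Q : R, 0 < Q /\
       ((Q ^+ 2)%:C)%C = ((\rank P * n)%:R - tm P 1) / (tm P 1 - tm P 2) /\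
       ((Q ^+ 2)%:C)%C *: (P1 P *m P2 P *m P1 P - P2 P *m P1 P *m P2 P) = P1 P - P2 P).
Proof.
move=> _ P_herm PP.
have [A_herm B_herm] := (P1_herm P_herm, P2_herm P_herm).
have [AA BB] := (P1_idem PP, P2_idem PP).
have trBA : \tr (P2 P) = \tr (P1 P) by rewrite mxtrace_P1 // mxtrace_P2.
rewrite /FP -(mxtrace_P1 PP); split.
  by case=> Q [_]; exact: Fpair_eq0_of_braid.
exact: braid_of_Fpair_eq0.
Qed.
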